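(* Let $n\ge 1$ be an integer and let $\mathcal{F}\subseteq\mathbb{Z}_{2^n}$. If $\mathcal{F}$ does not contain a projective $2$-cube, then $|\mathcal{F}|\le |L_1|=2^{n-1}$.
   Context: All arithmetic is in the cyclic group $\mathbb{Z}_{2^n}$. For a multiset $S=\{a_1,\dots,a_d\}$ of $d$ (not necessarily distinct) elements of $\mathbb{Z}_{2^n}$, the projective $d$-cube generated by $S$ is the set $\Sigma^*S=\{\sum_{i\in I}a_i \bmod 2^n:\emptyset\ne I\subseteq[d]\}$. A set $A$ contains a projective $d$-cube if $\Sigma^*S\subseteq A$ for some multiset $S$ of size $d$. Thus a projective $2$-cube is a set $\{a,b,a+b\}$ (with $a=b$ allowed, giving $\{a,2a\}$). Layers: for $1\le i\le n$, $L_i=\{x\in\mathbb{Z}_{2^n}: x\equiv 2^{i-1}\pmod{2^i}\}$, and $L_{n+1}=\{0\}$; so $L_1$ is the set of odd residues. *)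

From mathcomp Require Import all_boot.
Set Implicit Arguments. Unset Strict Implicit. Unset Printing Implicit Defensive.

(* Elements of Z_{2^n} are represented by residues in 'I_(2^n) (values 0..2^n-1),
   arithmetic is done in nat and reduced modulo 2^n. *)

(* Sigma^* S for a multiset S = (a_1,...,a_d) given as a d-tuple of residues:
   all sums over nonempty index sets I, reduced mod 2^n. *)
Definition proj_cube_sums (n d : nat) (S : d.-tuple nat) : {set 'I_(2 ^ n)} :=
  [set x : 'I_(2 ^ n) | [exists I : {set 'I_d},
     (I != set0) && (x == (\sum_(i in I) tnth S i) %% 2 ^ n :> nat)]].

Definition contains_proj_cube (n d : nat) (A : {set 'I_(2 ^ n)}) : Prop :=
  exists S : d.-tuple 'I_(2 ^ n),
    proj_cube_sums n [tuple of map val S] \subset A.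

Definition layer (n i : nat) : {set 'I_(2 ^ n)} :=
  [set x : 'I_(2 ^ n) | x %% 2 ^ i == 2 ^ i.-1].

(* If a lies in F and F has no projective 2-cube, then F and its translate
   F + a are disjoint, for any x in both would give the cube {x - a, a, x}.
   Two disjoint sets of size |F| fit in Z_{2^n}, so 2|F| <= 2^n.  The same
   translation argument with a = 1, applied to the odd residues and to their
   complement, shows that L_1 has exactly half of the 2^n residues. *)
From mathcomp Require Import all_boot.
From mathcomp Require Import zify.

Set Implicit Arguments.
Unset Strict Implicit.
Unset Printing Implicit Defensive.

Section Translation.

Variable N : nat.

Lemma ord_gt0 (x : 'I_N) : 0 < N.
Proof. exact: leq_ltn_trans (leq0n x) (ltn_ord x). Qed.

Definition add_ord (a : nat) (x : 'I_N) : 'I_N :=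
  Ordinal (ltn_pmod (x + a) (ord_gt0 x)).

Lemma val_add_ord a x : add_ord a x = (x + a) %% N :> nat.
Proof. by []. Qed.

Lemma add_ord_inj a : injective (add_ord a).
Proof.
move=> x y /(congr1 val) /= /eqP.
by rewrite -/(_ == _ %[mod _]) eqn_modDr !modn_small // => /eqP /val_inj.
Qed.

Lemma card_disjoint_translate (A : {set 'I_N}) a :
  [disjoint A & add_ord a @: A] -> #|A|.*2 <= N.
Proof.
move=> disjA; have [_] := leq_card_setU A (add_ord a @: A).
rewrite disjA card_imset; last exact: add_ord_inj.
move=> /eqP cardU; rewrite -addnn -cardU.
by apply: leq_trans (max_card _) _; rewrite card_ord.
Qed.

Lemma card_odd_ord : ~~ odd N -> #|[set x : 'I_N | odd x]|.*2 = N.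
Proof.
move=> /negbTE evenN; set O := [set x : 'I_N | odd x].
have card_parity_class (A : {set 'I_N}) b :
    A = [set x : 'I_N | odd x == b] -> #|A|.*2 <= N.
  move=> ->; apply: (@card_disjoint_translate _ 1).
  rewrite disjoint_subset; apply/subsetP => y; rewrite !inE => /eqP oddy.
  apply/imsetP => -[x]; rewrite inE => /eqP oddx yE.
  by move: oddy; rewrite yE val_add_ord odd_mod // addn1 /= oddx; case: (b) {oddx}.
have leO : #|O|.*2 <= N.
  by apply: (card_parity_class _ true); apply/setP => x; rewrite !inE eqb_id.
have leCO : #|~: O|.*2 <= N.
  by apply: (card_parity_class _ false); apply/setP => x; rewrite !inE eqbF_neg.
have := cardsC O; rewrite card_ord; lia.
Qed.

End Translation.

Lemma sum_set_ord2 (f : 'I_2 -> nat) (I : {set 'I_2}) :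
  \sum_(i in I) f i =
  (if ord0 \in I then f ord0 else 0) + (if ord_max \in I then f ord_max else 0).
Proof.
rewrite big_mkcond big_ord_recl big_ord1.
by have -> : lift ord0 ord0 = ord_max :> 'I_2 by apply: val_inj.
Qed.

Lemma proj_cube_sums2 n (x a : 'I_(2 ^ n)) :
  proj_cube_sums n [tuple of map val [tuple x; a]] = [set x; a; add_ord a x].
Proof.
apply/setP => z; rewrite !inE -orbA; apply/existsP/or3P => [[I /andP[I0 /eqP]]|].
  rewrite sum_set_ord2 !(tnth_nth 0) /=.
  case: ifP => e0; case: ifP => e1 => zE.
  - by apply: Or33; apply/eqP/val_inj.
  - by apply: Or31; apply/eqP/val_inj; rewrite /= zE addn0 modn_small.
  - by apply: Or32; apply/eqP/val_inj; rewrite /= zE add0n modn_small.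
  - case/set0Pn: I0 => i; have [-> | ->] : i = ord0 \/ i = ord_max.
      by case: i => -[|[|//]] Hi; [left | right]; apply: val_inj.
    + by rewrite e0.
    + by rewrite e1.
case=> /eqP->.
- exists [set ord0].
  by rewrite sum_set_ord2 !inE (tnth_nth 0) /= -card_gt0 cards1 addn0 modn_small //=.
- exists [set ord_max].
  by rewrite sum_set_ord2 !inE !(tnth_nth 0) /= -card_gt0 cards1 add0n modn_small //=.
- exists setT.
  by rewrite sum_set_ord2 !inE !(tnth_nth 0) -card_gt0 cardsT card_ord; apply/eqP.
Qed.

Lemma card_proj_cube2_free n (F : {set 'I_(2 ^ n)}) :
  ~ contains_proj_cube 2 F -> #|F|.*2 <= 2 ^ n.
Proof.
move=> noCube; have [-> | [a aF]] := set_0Vmem F; first by rewrite cards0.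
apply: (@card_disjoint_translate _ _ a).
rewrite disjoint_subset; apply/subsetP => y yF; rewrite inE.
apply/imsetP => -[x xF yE]; apply: noCube.
exists [tuple x; a]; rewrite proj_cube_sums2.
by apply/subsetP => z; rewrite !inE -orbA => /or3P[] /eqP->; rewrite // -yE.
Qed.

Lemma card_layer1 n : 0 < n -> #|layer n 1| = 2 ^ n.-1.
Proof.
case: n => [//|n] _; apply/eqP; rewrite -(eqn_pmul2l (isT : 0 < 2)) mul2n -expnS.
have -> : layer n.+1 1 = [set x : 'I_(2 ^ n.+1) | odd x].
  by apply/setP => x; rewrite !inE expn1 expn0 modn2 eqb1.
by rewrite card_odd_ord // oddX.
Qed.

Theorem proposition1p5 (n : nat) (F : {set 'I_(2 ^ n)}) :
  1 <= n ->
  ~ contains_proj_cube 2 F ->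
  #|F| <= #|layer n 1| /\ #|layer n 1| = 2 ^ n.-1.
Proof.
move=> n_gt0 noCube; rewrite card_layer1 //; split=> //.
rewrite -leq_double -[(2 ^ n.-1).*2]mul2n -expnS prednK //.
exact: card_proj_cube2_free.
Qed.
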